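(* Let $P$ be a set of $n$ points in general position in the plane such that the number $m$ of points of $P$ on the boundary of its convex hull satisfies $m\geq 6$. If $P$ has a good-triangle, then $\mu(D(P))\geq\binom{n}{2}-9$.
   Context: General position means no three points collinear. Let $\mathcal{P}$ be the set of all closed segments with both endpoints in $P$, and let $v_1,\dots,v_m$ be the points of $P$ on the boundary of the convex hull of $P$, in clockwise cyclic order, indices taken mod $m$. For a point $x\in P$ not on the convex hull boundary and $i\in[m]$, the triangle $\triangle$ with sides $xv_i$, $xv_{i+1}$, $v_iv_{i+1}$ is a good-triangle of $P$ if (i) $x$ lies in the interior of the quadrilateral $v_iv_{i+1}v_{i+2}v_{i+m-1}$, and (ii) every segment $uv\in\mathcal{P}$ other than the three sides of $\triangle$ that intersects all three sides of $\triangle$ belongs to $\{v_iv_{i+2},v_iv_{i+3},v_{i+1}v_{i+m-2},v_{i+1}v_{i+m-1}\}$. $D(P)$ is the graph with vertex set $\mathcal{P}$, two segments adjacent iff disjoint. For a graph $G$ and $U\subseteq V(G)$, two distinct vertices $x,y\in U$ are $U$-mutually visible if $G$ contains a shortest $x$-$y$ path none of whose internal vertices lies in $U$; $U$ is a mutual-visibility set if every two distinct vertices of $U$ are $U$-mutually visible. $\mu(G)$ is the maximum size of a mutual-visibility set of $G$. *)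

From HB Require Import structures.
From mathcomp Require Import all_boot all_order all_algebra.
From mathcomp Require Import boolp reals.
Set Implicit Arguments. Unset Strict Implicit. Unset Printing Implicit Defensive.
Import Order.TTheory GRing.Theory Num.Theory.
Local Open Scope ring_scope.

Section Geometry.
Variable R : realType.
Definition point := (R * R)%type.

(* > 0 iff a,b,c counterclockwise; = 0 iff collinear *)
Definition orient (a b c : point) : R :=
  (b.1 - a.1) * (c.2 - a.2) - (b.2 - a.2) * (c.1 - a.1).

(* interior of a subset of R^2 (standard topology, square neighbourhoods) *)
Definition interior2 (A : point -> Prop) (z : point) : Prop :=
  exists2 e : R, 0 < e & forall y : point,
    `|y.1 - z.1| < e -> `|y.2 - z.2| < e -> A y.

Variable n : nat.
Variable pt : 'I_n -> point.   (* the point set P = {pt i | i < n} *)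

Definition general_position : Prop :=
  forall i j k : 'I_n, i != j -> j != k -> i != k ->
    orient (pt i) (pt j) (pt k) != 0.

Definition conv (S : {set 'I_n}) (z : point) : Prop :=
  exists w : 'I_n -> R,
    [/\ forall i, 0 <= w i,
        forall i, i \notin S -> w i = 0,
        \sum_i w i = 1
      & z = (\sum_i w i * (pt i).1, \sum_i w i * (pt i).2)].

Definition on_hull_boundary (z : point) : Prop :=
  conv setT z /\ ~ interior2 (conv setT) z.

Definition hull_idx : {set 'I_n} := [set i | `[< on_hull_boundary (pt i) >]].

Definition cyc (v : nat -> 'I_n) (k : nat) : 'I_n := v (k %% #|hull_idx|)%N.

(* v_0, ..., v_{m-1} are the hull points, listed in clockwise cyclic order:
   each directed edge v_k v_{k+1} has all other points of P strictly on its right *)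
Definition clockwise_enum (v : nat -> 'I_n) : Prop :=
  let m := #|hull_idx| in
  [/\ forall k l, (k < m)%N -> (l < m)%N -> v k = v l -> k = l,
      forall k, (k < m)%N -> v k \in hull_idx
    & forall k (j : 'I_n), (k < m)%N -> j != cyc v k -> j != cyc v k.+1 ->
        orient (pt (cyc v k)) (pt (cyc v k.+1)) (pt j) < 0].

(* segments of P : two-element index sets; the closed segment is their hull *)
Definition segment := {s : {set 'I_n} | #|s| == 2%N}.

Definition meets (s t : {set 'I_n}) : Prop := exists z, conv s z /\ conv t z.

Definition seg_disjoint (s t : segment) : Prop := ~ meets (val s) (val t).

(* the triangle x v_i v_{i+1} is a good-triangle (indices from 0, mod m) *)
Definition good_triangle (v : nat -> 'I_n) (x : 'I_n) (i : nat) : Prop :=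
  let m := #|hull_idx| in
  let V k := cyc v (i + k) in
  [/\ x \notin hull_idx,
      interior2 (conv [set V 0%N; V 1%N; V 2%N; V (m - 1)%N]) (pt x)
    & forall s : segment,
        val s \notin [set [set x; V 0%N]; [set x; V 1%N]; [set V 0%N; V 1%N]] ->
        meets (val s) [set x; V 0%N] -> meets (val s) [set x; V 1%N] ->
        meets (val s) [set V 0%N; V 1%N] ->
        val s \in [set [set V 0%N; V 2%N]; [set V 0%N; V 3%N];
                       [set V 1%N; V (m - 2)%N]; [set V 1%N; V (m - 1)%N]]].

Definition has_good_triangle : Prop :=
  exists v x i, clockwise_enum v /\ good_triangle v x i.

End Geometry.

Section Visibility.
Variable T : finType.
Variable adj : T -> T -> Prop.

Fixpoint walk (x : T) (p : seq T) : Prop :=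
  match p with [::] => True | y :: q => adj x y /\ walk y q end.

(* x :: p is a path from x to y *)
Definition is_path (x y : T) (p : seq T) : Prop := walk x p /\ last x p = y.

Definition shortest_path (x y : T) (p : seq T) : Prop :=
  is_path x y p /\ forall q, is_path x y q -> (size p <= size q)%N.

Definition mutually_visible (U : {set T}) (x y : T) : Prop :=
  exists p, shortest_path x y p /\
    forall z, z \in behead (belast x p) -> z \notin U.

Definition mv_set (U : {set T}) : Prop :=
  forall x y, x \in U -> y \in U -> x != y -> mutually_visible U x y.

Definition mu : nat := \max_(U : {set T} | `[< mv_set U >]) #|U|.

End Visibility.

Definition Dgraph (R : realType) (n : nat) (pt : 'I_n -> point R) :=
  @seg_disjoint R n pt.

From mathcomp Require Import all_boot all_order all_algebra.
From mathcomp Require Import boolp reals.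
From mathcomp Require Import ring lra zify.
Set Implicit Arguments. Unset Strict Implicit. Unset Printing Implicit Defensive.
Import Order.TTheory GRing.Theory Num.Theory.
Local Open Scope ring_scope.

(* Write a = v_i and b = v_(i+1), so that [x a b] is the good triangle, and call
   exceptional the nine segments formed by the three sides of the triangle, the four
   segments a v_(i+2), a v_(i+3), b v_(i-2), b v_(i-1) allowed by its definition, and
   the hull edges v_(i+2) v_(i+3) and v_(i-2) v_(i-1). The remaining C(n,2) - 9 segments
   form a mutual-visibility set of D(P): two of them that are disjoint are adjacent, and
   for two of them that meet, some exceptional segment is disjoint from both, which gives
   a shortest path of length two whose inner vertex lies outside the set. If neither segment has an endpoint in
   {a, b}, the hull edge a b works. If one of them passes through a, it meets the sides
   x a and a b, so by the good-triangle property it misses x b; then x b works unless the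
   other segment meets x b, and in that case one of the two exceptional hull edges works,
   except in configurations that contradict the convex position of the hull points or
   the position of x inside the quadrilateral a b v_(i+2) v_(i-1). Segments through b
   are handled symmetrically. *)

(** * Orientation and segments *)

Section Orientation.
Variable R : realType.
Implicit Types a b c e o p q u v w z : point R.

Lemma orient_cycle a b c : orient a b c = orient b c a.
Proof. rewrite /orient; ring. Qed.

Lemma orient_swap12 a b c : orient a b c = - orient b a c.
Proof. rewrite /orient; ring. Qed.

Lemma orient_swap23 a b c : orient a b c = - orient a c b.
Proof. rewrite /orient; ring. Qed.

Lemma orient_aba a b : orient a b a = 0.
Proof. rewrite /orient; ring. Qed.

Lemma orient_abb a b : orient a b b = 0.
Proof. rewrite /orient; ring. Qed.

Lemma orient_lerp a b p q (t : R) :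
  orient a b ((1 - t) * p.1 + t * q.1, (1 - t) * p.2 + t * q.2) =
  (1 - t) * orient a b p + t * orient a b q.
Proof. rewrite /orient /=; ring. Qed.

Lemma orient_pivot a b p r w :
  orient a b w * orient p b r = orient a b p * orient w b r + orient a b r * orient p b w.
Proof. rewrite /orient; ring. Qed.

Lemma orient_pivot_lt0 a b p r w : orient p b r < 0 ->
  orient a b p < 0 -> orient w b r < 0 -> orient a b r < 0 -> orient p b w < 0 ->
  orient a b w < 0.
Proof.
move=> pbr abp wbr abr pbw; have := orient_pivot a b p r w.
have : 0 < orient a b p * orient w b r + orient a b r * orient p b w.
  by rewrite addr_gt0 // nmulr_rgt0.
by move=> + pivot; rewrite -pivot nmulr_lgt0.
Qed.

Lemma orient_pivot_gt0 a b p r w : 0 < orient p b r ->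
  0 < orient a b p -> 0 < orient w b r -> 0 < orient a b r -> 0 < orient p b w ->
  0 < orient a b w.
Proof.
move=> pbr abp wbr abr pbw; have := orient_pivot a b p r w.
have : 0 < orient a b p * orient w b r + orient a b r * orient p b w.
  by rewrite addr_gt0 // mulr_gt0.
by move=> + pivot; rewrite -pivot pmulr_lgt0.
Qed.

(* Clockwise order of the rays from [o] is transitive among rays lying strictly
   to the right of a reference ray [o e]. *)
Lemma orient_trans o e u v w :
  orient o u v < 0 -> orient o v w < 0 ->
  orient o e u < 0 -> orient o e v < 0 -> orient o e w < 0 ->
  orient o u w < 0.
Proof.
move=> ouv ovw eu ev ew.
have expand : orient o u w * orient o e v =
  orient o v w * orient o e u + orient o u v * orient o e w.
  by rewrite /orient; ring.
have : 0 < orient o u w * orient o e v by rewrite expand addr_gt0 // nmulr_rgt0.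
by rewrite nmulr_lgt0.
Qed.

Lemma sqr_dist_gt0 p q : p != q -> 0 < (q.1 - p.1) ^+ 2 + (q.2 - p.2) ^+ 2.
Proof.
move=> pq; rewrite lt_neqAle addr_ge0 ?sqr_ge0 // andbT eq_sym.
rewrite paddr_eq0 ?sqr_ge0 // !sqrf_eq0 !subr_eq0; apply: contra pq => /andP[/eqP e1 /eqP e2].
by rewrite [p]surjective_pairing [q]surjective_pairing e1 e2.
Qed.

Lemma on_line_lerp p q z : p != q -> orient p q z = 0 ->
  exists t, z = ((1 - t) * p.1 + t * q.1, (1 - t) * p.2 + t * q.2).
Proof.
move=> /sqr_dist_gt0 d_gt0 z_on; set d := _ + _ in d_gt0.
set s := (z.1 - p.1) * (q.1 - p.1) + (z.2 - p.2) * (q.2 - p.2).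
have e1 : (z.1 - p.1) * d = s * (q.1 - p.1) - (q.2 - p.2) * orient p q z.
  by rewrite /orient /s /d; ring.
have e2 : (z.2 - p.2) * d = s * (q.2 - p.2) + (q.1 - p.1) * orient p q z.
  by rewrite /orient /s /d; ring.
rewrite z_on mulr0 ?subr0 ?addr0 in e1 e2.
have d0 : d != 0 by rewrite gt_eqF.
exists (s / d); rewrite [z]surjective_pairing; congr pair.
  by rewrite -[z.1](addrNK p.1) -[z.1 - p.1](mulfK d0) e1; field.
by rewrite -[z.2](addrNK p.2) -[z.2 - p.2](mulfK d0) e2; field.
Qed.

End Orientation.

Section Pairs.
Variable T : finType.

Lemma set2_mem_other (a p q : T) : p != q -> a \in [set p; q] ->
  exists w, [/\ [set p; q] = [set a; w], w \in [set p; q] & w != a].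
Proof.
move=> pq; rewrite !inE => /orP[]/eqP->.
  by exists q; split; rewrite ?inE ?eqxx ?orbT // eq_sym.
by exists p; split; rewrite ?inE ?eqxx // setUC.
Qed.

Lemma set2_mem_neq (w a b u : T) : w \in [set a; b] -> a != u -> b != u -> w != u.
Proof. by rewrite !inE => /orP[]/eqP->. Qed.

End Pairs.

Section Segments.
Variables (R : realType) (n : nat) (pt : 'I_n -> point R).
Implicit Types (S T : {set 'I_n}) (z p q : point R).

Lemma conv_orient_sum S z p q : conv pt S z ->
  exists w : 'I_n -> R, [/\ forall i, 0 <= w i, forall i, i \notin S -> w i = 0,
     \sum_i w i = 1 & orient p q z = \sum_i w i * orient p q (pt i)].
Proof.
case=> w [w0 wS w1 ->]; exists w; split => //.
rewrite /orient /=.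
set a1 := q.1 - p.1; set a2 := q.2 - p.2.
transitivity (a1 * (\sum_i w i * (pt i).2) - a2 * (\sum_i w i * (pt i).1)
   + (a2 * p.1 - a1 * p.2) * \sum_i w i); first by rewrite w1; ring.
rewrite !mulr_sumr -sumrB -big_split /=; apply: eq_bigr => i _; ring.
Qed.

Lemma conv_orient_le0 S z p q : conv pt S z ->
  (forall k, k \in S -> orient p q (pt k) <= 0) -> orient p q z <= 0.
Proof.
move=> /(conv_orient_sum p q) [w [w0 wS _ ->]] S_le0.
apply: sumr_le0 => i _; case: (boolP (i \in S)) => iS.
  by rewrite mulr_ge0_le0 // S_le0.
by rewrite wS // mul0r.
Qed.

Lemma conv_orient_lt0 S z p q : conv pt S z ->
  (forall k, k \in S -> orient p q (pt k) < 0) -> orient p q z < 0.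
Proof.
move=> zS S_lt0; rewrite lt_neqAle (conv_orient_le0 zS) => [|k /S_lt0/ltW //].
rewrite andbT; apply/eqP => z0.
have [w [w0 wS w1 zE]] := conv_orient_sum p q zS.
suff w_eq0 : forall i, w i = 0 by move: w1; rewrite big1 // => /esym/eqP; rewrite oner_eq0.
have terms_le0 i : w i * orient p q (pt i) <= 0.
  by case: (boolP (i \in S)) => iS; [rewrite mulr_ge0_le0 // ltW ?S_lt0 | rewrite wS ?mul0r].
move=> i; apply/eqP; case: (boolP (i \in S)) => iS; last by rewrite wS.
have : \sum_j (- (w j * orient p q (pt j))) == 0 by rewrite sumrN -zE z0 oppr0.
rewrite psumr_eq0 => [/allP/(_ i (mem_index_enum i))|j _]; last by rewrite oppr_ge0.
by rewrite oppr_eq0 mulf_eq0 (lt_eqF (S_lt0 i iS)) orbF.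
Qed.

Lemma conv_mem S k : k \in S -> conv pt S (pt k).
Proof.
move=> kS; exists (fun i => if i == k then 1 else 0); split.
- by move=> i; case: eqP.
- by move=> i iS; case: eqP => // ik; rewrite ik kS in iS.
- by rewrite (bigD1 k) //= eqxx big1 ?addr0 // => i /negPf ->.
- rewrite [LHS]surjective_pairing; congr pair; rewrite (bigD1 k) //= eqxx mul1r big1 ?addr0 //;
    by move=> i /negPf ->; rewrite mul0r.
Qed.

Lemma sum_two i j (a b : R) (f : 'I_n -> R) : i != j ->
  \sum_k (if k == i then a else if k == j then b else 0) * f k = a * f i + b * f j.
Proof.
move=> ij; rewrite (bigD1 i) //= eqxx (bigD1 j) /=; last by rewrite eq_sym.
rewrite eq_sym (negPf ij) eqxx big1 ?addr0 ?addrA //.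
by move=> k /andP[/negPf -> /negPf ->]; rewrite mul0r.
Qed.

Lemma conv2_lerp i j t : i != j -> 0 <= t -> t <= 1 ->
  conv pt [set i; j] ((1 - t) * (pt i).1 + t * (pt j).1, (1 - t) * (pt i).2 + t * (pt j).2).
Proof.
move=> ij t0 t1.
exists (fun k => if k == i then 1 - t else if k == j then t else 0); split.
- by move=> k; case: eqP => _; [rewrite subr_ge0 | case: eqP].
- by move=> k; rewrite !inE negb_or => /andP[/negPf -> /negPf ->].
- have := @sum_two i j (1 - t) t (fun=> 1) ij; rewrite !mulr1 subrK => sum1.
  by apply: etrans sum1; apply: eq_bigr => k _; rewrite mulr1.
- by congr pair; rewrite sum_two.
Qed.

Lemma conv2_orient0 i j z : conv pt [set i; j] z -> orient (pt i) (pt j) z = 0.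
Proof.
move=> zij; apply/eqP; rewrite eq_le; apply/andP; split.
  apply: conv_orient_le0 zij _ => k.
  by rewrite !inE => /orP[]/eqP->; rewrite ?orient_aba ?orient_abb.
rewrite -oppr_le0 orient_swap12 opprK; apply: conv_orient_le0 zij _ => k;
  by rewrite !inE => /orP[]/eqP->; rewrite ?orient_aba ?orient_abb.
Qed.

Lemma meetsC S T : meets pt S T -> meets pt T S.
Proof. by case=> z [zS zT]; exists z. Qed.

Lemma meets_shared S T k : k \in S -> k \in T -> meets pt S T.
Proof. by move=> kS kT; exists (pt k); split; apply: conv_mem. Qed.

Lemma right_of_line_not_meets i j T :
  (forall k, k \in T -> orient (pt i) (pt j) (pt k) < 0) -> ~ meets pt [set i; j] T.
Proof.
move=> T_right [z [/conv2_orient0 z_on /conv_orient_lt0 /(_ T_right)]].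
by rewrite z_on ltxx.
Qed.

Lemma left_of_line_not_meets i j T :
  (forall k, k \in T -> 0 < orient (pt i) (pt j) (pt k)) -> ~ meets pt [set i; j] T.
Proof.
move=> T_left; rewrite setUC; apply: right_of_line_not_meets => k /T_left ?.
by rewrite orient_swap12 oppr_lt0.
Qed.

Lemma meets_orient_opp i j k l : meets pt [set i; j] [set k; l] ->
  orient (pt i) (pt j) (pt k) != 0 -> orient (pt i) (pt j) (pt l) != 0 ->
  orient (pt i) (pt j) (pt k) * orient (pt i) (pt j) (pt l) < 0.
Proof.
move=> ijkl k0 l0; rewrite ltNge; apply/negP => same_side.
move: (k0) (l0); rewrite !neq_lt => /orP[k_lt0|k_gt0] /orP[l_lt0|l_gt0]; try nra.
- by apply: (right_of_line_not_meets _ ijkl) => u; rewrite !inE => /orP[]/eqP->.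
- by apply: (left_of_line_not_meets _ ijkl) => u; rewrite !inE => /orP[]/eqP->.
Qed.

End Segments.

Section Crossings.
Variables (R : realType) (n : nat) (pt : 'I_n -> point R).

Local Notation lerp p q t :=
  ((1 - t) * p.1 + t * q.1, (1 - t) * p.2 + t * q.2) (only parsing).

Lemma crossing_on_line i j k l : k != l -> pt i != pt j ->
  orient (pt i) (pt j) (pt k) * orient (pt i) (pt j) (pt l) < 0 ->
  exists t z, conv pt [set k; l] z /\ z = lerp (pt i) (pt j) t.
Proof.
move=> kl ij AB_lt0.
set A := orient _ _ (pt k) in AB_lt0 *; set B := orient _ _ (pt l) in AB_lt0 *.
have BA_neq0 : B - A != 0 by rewrite subr_eq0; apply/eqP => BA; rewrite BA in AB_lt0; nra.
have [s0 s1] : 0 <= B / (B - A) /\ B / (B - A) <= 1.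
  have [A_lt0|A_gt0] : A < 0 \/ 0 < A.
    by case: (ltgtP A 0) AB_lt0 => [| |->]; [left|right|rewrite mul0r ltxx].
  - have B_gt0 : 0 < B by nra.
    by split; [apply: divr_ge0 | rewrite ler_pdivrMr]; lra.
  - have B_lt0 : B < 0 by nra.
    by rewrite -mulrNN -invrN; split; [apply: divr_ge0 | rewrite ler_pdivrMr]; lra.
have [|t zE] := @on_line_lerp _ (pt i) (pt j) (lerp (pt k) (pt l) (1 - B / (B - A))) ij.
  by rewrite orient_lerp -/A -/B; field.
by exists t, (lerp (pt k) (pt l) (1 - B / (B - A))); split => //; apply: conv2_lerp => //; lra.
Qed.

Lemma meets_of_crossing i j k l : k != l -> pt i != pt j ->
  orient (pt i) (pt j) (pt k) * orient (pt i) (pt j) (pt l) < 0 ->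
  orient (pt k) (pt l) (pt i) * orient (pt k) (pt l) (pt j) < 0 ->
  meets pt [set i; j] [set k; l].
Proof.
move=> kl ij ij_splits kl_splits.
have [t [z [zkl zE]]] := crossing_on_line kl ij ij_splits.
have := conv2_orient0 zkl; rewrite zE orient_lerp.
set A := orient _ _ (pt i) in kl_splits *; set B := orient _ _ (pt j) in kl_splits * => z_on.
have i_neq_j : i != j by apply: contraNneq ij => ->.
have tBA : t * (B - A) = - A by lra.
have [t0 t1] : 0 <= t /\ t <= 1.
  have [A_lt0|A_gt0] : A < 0 \/ 0 < A.
    by case: (ltgtP A 0) kl_splits => [| |->]; [left|right|rewrite mul0r ltxx].
  - have B_gt0 : 0 < B by nra.
    by split; rewrite leNgt; apply/negP => ?; nra.
  - have B_lt0 : B < 0 by nra.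
    by split; rewrite leNgt; apply/negP => ?; nra.
by exists z; split => //; rewrite zE; apply: conv2_lerp.
Qed.

(* Line [i j] meets the lines [A1 A2] and [B1 B2] exactly at [i] and [j]; as [k l]
   lies to the right of both lines, it crosses line [i j] between [i] and [j]. *)
Lemma meets_of_crossing_in_wedge i j k l (A1 A2 B1 B2 : point R) : k != l -> pt i != pt j ->
  orient (pt i) (pt j) (pt k) * orient (pt i) (pt j) (pt l) < 0 ->
  orient A1 A2 (pt i) = 0 -> orient A1 A2 (pt j) < 0 ->
  orient A1 A2 (pt k) <= 0 -> orient A1 A2 (pt l) <= 0 ->
  orient B1 B2 (pt j) = 0 -> orient B1 B2 (pt i) < 0 ->
  orient B1 B2 (pt k) <= 0 -> orient B1 B2 (pt l) <= 0 ->
  meets pt [set i; j] [set k; l].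
Proof.
move=> kl ij ij_splits Ai Aj Ak Al Bj Bi Bk Bl.
have [t [z [zkl zE]]] := crossing_on_line kl ij ij_splits.
have right_of_both (P Q : point R) : orient P Q (pt k) <= 0 -> orient P Q (pt l) <= 0 ->
    (1 - t) * orient P Q (pt i) + t * orient P Q (pt j) <= 0.
  move=> Pk Pl; rewrite -orient_lerp -zE; apply: conv_orient_le0 zkl _ => u.
  by rewrite !inE => /orP[]/eqP->.
have := right_of_both _ _ Ak Al; have := right_of_both _ _ Bk Bl; rewrite Ai Bj => ? ?.
have i_neq_j : i != j by apply: contraNneq ij => ->.
by exists z; split => //; rewrite zE; apply: conv2_lerp => //; nra.
Qed.

End Crossings.

Lemma interior_orient_lt0 (R : realType) (n : nat) (pt : 'I_n -> point R)
    (S : {set 'I_n}) (z p q : point R) :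
  p != q -> interior2 (conv pt S) z ->
  (forall k, k \in S -> orient p q (pt k) <= 0) -> orient p q z < 0.
Proof.
move=> pq [e e_gt0 ball_in] S_le0.
have d_gt0 := sqr_dist_gt0 pq.
set u1 := q.1 - p.1 in d_gt0; set u2 := q.2 - p.2 in d_gt0; set d := _ + _ in d_gt0.
set M := 1 + `|u1| + `|u2|.
have M_gt0 : 0 < M by rewrite /M; have := normr_ge0 u1; have := normr_ge0 u2; lra.
set s := e / (2 * M).
have s_gt0 : 0 < s by rewrite divr_gt0 // mulr_gt0.
have small u : `|u| < M -> `|s * u| < e.
  move=> uM; rewrite normrM (gtr0_norm s_gt0) /s mulrAC ltr_pdivrMr ?mulr_gt0 //.
  have : 0 <= `|u| by [].
  nra.
(* push [z] a little to the left of the line [p q]; it stays in the hull *)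
set y : point R := (z.1 - s * u2, z.2 + s * u1).
have y_in : conv pt S y.
  apply: ball_in; rewrite /y /= addrAC subrr add0r ?normrN; apply: small;
    by rewrite /M; have := normr_ge0 u1; have := normr_ge0 u2; lra.
have := conv_orient_le0 y_in S_le0.
have -> : orient p q y = orient p q z + s * d by rewrite /orient /y /d /u1 /u2 /=; ring.
have : 0 < s * d by apply: mulr_gt0.
lra.
Qed.

(** * Points in convex position *)

Section ConvexPosition.
Variables (R : realType) (n : nat) (pt : 'I_n -> point R) (v : nat -> 'I_n).
Hypothesis v_clockwise : clockwise_enum pt v.
Hypothesis hull_gt0 : (0 < #|hull_idx pt|)%N.
Local Notation m := #|hull_idx pt|.
Local Notation W := (cyc pt v).

Lemma cyc_in_hull k : W k \in hull_idx pt.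
Proof. by case: v_clockwise => _ + _; apply; rewrite ltn_pmod. Qed.

Lemma cyc_neq r a b : (a < m)%N -> (b < m)%N -> a != b -> W (r + a) != W (r + b).
Proof.
move=> am bm ab; apply/eqP => e; case: v_clockwise => v_inj _ _.
have /eqP := v_inj _ _ (ltn_pmod _ hull_gt0) (ltn_pmod _ hull_gt0) e.
by rewrite eqn_modDl !modn_small // (negPf ab).
Qed.

Lemma cyc_edge_right k j : j != W k -> j != W k.+1 ->
  orient (pt (W k)) (pt (W k.+1)) (pt j) < 0.
Proof.
have succ_mod : ((k %% m).+1 %% m = k.+1 %% m)%N by rewrite -addn1 modnDml addn1.
case: v_clockwise => _ _ /(_ (k %% m)%N j (ltn_pmod _ hull_gt0)).
by rewrite /cyc modn_mod succ_mod.
Qed.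

Lemma cyc_orient_lt0 r j k : (0 < j)%N -> (j < k)%N -> (k < m)%N ->
  orient (pt (W r)) (pt (W (r + j))) (pt (W (r + k))) < 0.
Proof.
have Wr : W r = W (r + 0) by rewrite addn0.
have turn a : (0 < a)%N -> (a.+1 < m)%N ->
    orient (pt (W r)) (pt (W (r + a))) (pt (W (r + a.+1))) < 0.
  move=> a_gt0 am; rewrite orient_cycle addnS; apply: cyc_edge_right => //.
    by rewrite Wr; apply: cyc_neq => //; lia.
  by rewrite Wr -addnS; apply: cyc_neq => //; lia.
have right_of_first a : (1 < a)%N -> (a < m)%N ->
    orient (pt (W r)) (pt (W r.+1)) (pt (W (r + a))) < 0.
  move=> a_gt1 am; apply: cyc_edge_right => //.
    by rewrite Wr; apply: cyc_neq => //; lia.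
  by rewrite -addn1; apply: cyc_neq => //; lia.
move=> j_gt0 jk km; have [j1|j_neq1] := eqVneq j 1%N.
  by rewrite j1 addn1 in jk *; apply: right_of_first.
elim: k jk km => [//|k IHk]; rewrite ltnS leq_eqVlt => /orP[/eqP <- km|jk km].
  by apply: turn.
apply: (orient_trans (e := pt (W r.+1))) (IHk jk (ltnW km)) (turn _ (ltn_trans j_gt0 jk) km) _ _ _;
  by apply: right_of_first; lia.
Qed.

End ConvexPosition.

(** * Mutual visibility *)

Section MutualVisibility.
Variables (T : finType) (adj : T -> T -> Prop).
Implicit Types (U : {set T}) (x y z : T).

Lemma adjacent_mutually_visible U x y : x != y -> adj x y -> mutually_visible adj U x y.
Proof.
move=> xy xy_adj; exists [:: y]; split=> //; split=> // -[|? ?] [_ /= yx] //.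
by rewrite yx eqxx in xy.
Qed.

Lemma common_neighbour_mutually_visible U x y z : x != y -> ~ adj x y ->
  z \notin U -> adj x z -> adj z y -> mutually_visible adj U x y.
Proof.
move=> xy xy_nadj zU xz zy; exists [:: z; y]; split; last by move=> u; rewrite inE => /eqP->.
split=> // -[|u [|? ?]] [walk_q /= q_last] //; first by rewrite q_last eqxx in xy.
by case: walk_q; rewrite q_last.
Qed.

Lemma mv_set_common_neighbour U :
  (forall x y, x \in U -> y \in U -> x != y -> ~ adj x y ->
     exists2 z, z \notin U & adj x z /\ adj z y) ->
  mv_set adj U.
Proof.
move=> common x y xU yU xy; case: (pselect (adj x y)) => [|xy_nadj].
  exact: adjacent_mutually_visible.
have [z zU [xz zy]] := common x y xU yU xy xy_nadj.
exact: common_neighbour_mutually_visible zU xz zy.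
Qed.

Lemma mv_set_card_le_mu U : mv_set adj U -> (#|U| <= mu adj)%N.
Proof.
by move=> U_mv; apply: (@leq_bigmax_cond _ (fun U => `[< mv_set adj U >]) (fun U => #|U|));
  apply/asboolP.
Qed.

End MutualVisibility.

Lemma card_segment n : #|{: segment n}| = 'C(n, 2).
Proof.
rewrite card_sig -[n in 'C(n, _)]card_ord -card_draws.
by apply: eq_card => A; rewrite !inE.
Qed.

(** * The configuration around a good triangle *)

(* [lia] is very slow on the real-valued hypotheses present below, so keep only the
   arithmetic facts about indices. *)
Ltac nat_lia := repeat match goal with
  | H : ?T |- _ => lazymatch T with
                  | is_true (leq _ _) => fail
                  | is_true ((_ == _) || _) => fail
                  | _ => clear H
                  end
  end; lia.

Section GoodTriangle.
Variables (R : realType) (n : nat) (pt : 'I_n -> point R).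
Hypothesis pt_inj : injective pt.
Hypothesis pt_general : general_position pt.
Variable v : nat -> 'I_n.
Hypothesis v_clockwise : clockwise_enum pt v.
Hypothesis hull_ge6 : (6 <= #|hull_idx pt|)%N.
Variables (x : 'I_n) (i : nat).
Hypothesis x_good : good_triangle pt v x i.

(* With a = V 0, b = V 1, c = V 2, c' = V 3, d = V (m - 2) and d' = V (m - 1), lemma
   names speak of these points; primed lemmas concern the hull edge d d'. *)
Local Notation m := #|hull_idx pt|.
Local Notation V k := (cyc pt v (i + k)).
Local Notation O p q r := (orient (pt p) (pt q) (pt r)).

Lemma hull_gt0 : (0 < m)%N.
Proof. exact: leq_trans hull_ge6. Qed.

Lemma V_neq a b : (a < m)%N -> (b < m)%N -> a != b -> V a != V b.
Proof. exact: (cyc_neq v_clockwise hull_gt0). Qed.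

Lemma x_neq_V k : x != V k.
Proof.
case: x_good => x_inner _ _; apply: contraNneq x_inner => ->.
exact: (cyc_in_hull v_clockwise hull_gt0).
Qed.

Lemma V_orient_lt0 a b c : (a < b)%N -> (b < c)%N -> (c < m)%N -> O (V a) (V b) (V c) < 0.
Proof.
move=> ab bc cm; have := cyc_orient_lt0 v_clockwise hull_gt0 (i + a) (j := b - a) (k := c - a).
by rewrite -!addnA !subnKC ?(ltnW ab) ?(ltnW (ltn_trans ab bc)) //; apply; nat_lia.
Qed.

Lemma V_edge_right k j : j != V k -> j != V k.+1 -> O (V k) (V k.+1) j < 0.
Proof.
by move=> jk jk1; rewrite addnS; apply: (cyc_edge_right v_clockwise hull_gt0); rewrite -?addnS.
Qed.

Lemma pred2S : (m - 2).+1 = (m - 1)%N.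
Proof. by have := hull_ge6; nat_lia. Qed.

Lemma V_edge_right' j : j != V (m - 2) -> j != V (m - 1) -> O (V (m - 2)) (V (m - 1)) j < 0.
Proof. by rewrite -pred2S; apply: V_edge_right. Qed.

Lemma V_pred1S : V (m - 1).+1 = V 0.
Proof. by rewrite /cyc subn1 prednK ?hull_gt0 // addn0 modnDr. Qed.

Lemma O_neq0 p q r : p != q -> q != r -> p != r -> O p q r != 0.
Proof. exact: pt_general. Qed.

Lemma pt_neq p q : p != q -> pt p != pt q.
Proof. by apply: contra => /eqP/pt_inj->. Qed.

Ltac neq := solve [ assumption | rewrite eq_sym; assumption
                  | apply: V_neq; nat_lia | apply: x_neq_V | rewrite eq_sym; apply: x_neq_V ].

Ltac eval_eqs := rewrite ?eqxx; repeat match goal with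
  | |- context[?a == ?b] =>
      let ab := fresh in (have ab : a != b by neq); rewrite (negPf ab); clear ab
  end.

Lemma x_right_of_chord j k : (j == 2%N) || (j == 3%N) -> (k == m - 2)%N || (k == m - 1)%N ->
  O (V j) (V k) x < 0.
Proof.
case: x_good => _ x_in_quad _ hj hk.
have [j1 j4] : (1 < j)%N /\ (j < 4)%N by case/orP: hj => /eqP->.
have [k3 km] : (3 < k)%N /\ (k < m)%N by case/orP: hk => /eqP->; nat_lia.
apply: (interior_orient_lt0 _ x_in_quad); first by apply: pt_neq; neq.
move=> p; rewrite !inE -!orbA => /or4P[]/eqP->.
- by apply/ltW; rewrite -orient_cycle; apply: V_orient_lt0; nat_lia.
- by apply/ltW; rewrite -orient_cycle; apply: V_orient_lt0; nat_lia.
- case/orP: hj => /eqP->; first by rewrite orient_aba.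
  by apply/ltW; rewrite -orient_cycle; apply: V_orient_lt0; nat_lia.
- case/orP: hk => /eqP->; last by rewrite orient_abb.
  by apply/ltW; apply: V_orient_lt0; nat_lia.
Qed.

Lemma chord_not_meets_xa_xb j k : (j == 2%N) || (j == 3%N) -> (k == m - 2)%N || (k == m - 1)%N ->
  ~ meets pt [set V j; V k] [set x; V 0] /\ ~ meets pt [set V j; V k] [set x; V 1].
Proof.
move=> hj hk.
have [j1 j4] : (1 < j)%N /\ (j < 4)%N by case/orP: hj => /eqP->.
have [k3 km] : (3 < k)%N /\ (k < m)%N by case/orP: hk => /eqP->; nat_lia.
by split; apply: right_of_line_not_meets => p; rewrite !inE => /orP[]/eqP->;
  [exact: x_right_of_chord | rewrite -orient_cycle; apply: V_orient_lt0; nat_lia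
  |exact: x_right_of_chord | rewrite -orient_cycle; apply: V_orient_lt0; nat_lia].
Qed.

Lemma hull_edge_not_meets k p q : p != V k -> p != V k.+1 -> q != V k -> q != V k.+1 ->
  ~ meets pt [set V k; V k.+1] [set p; q].
Proof.
move=> *; apply: right_of_line_not_meets => u.
by rewrite !inE => /orP[]/eqP->; apply: V_edge_right.
Qed.

Lemma hull_edge_meets k p q : p != V k -> p != V k.+1 ->
  meets pt [set V k; V k.+1] [set p; q] -> (q == V k) || (q == V k.+1).
Proof.
move=> pk pk1 meet; apply/negPn/negP; rewrite negb_or => /andP[qk qk1].
exact: hull_edge_not_meets pk pk1 qk qk1 meet.
Qed.

Lemma hull_edge_not_meets' p q :
  p != V (m - 2) -> p != V (m - 1) -> q != V (m - 2) -> q != V (m - 1) ->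
  ~ meets pt [set V (m - 2); V (m - 1)] [set p; q].
Proof. by rewrite -pred2S; apply: hull_edge_not_meets. Qed.

Lemma hull_edge_meets' p q : p != V (m - 2) -> p != V (m - 1) ->
  meets pt [set V (m - 2); V (m - 1)] [set p; q] -> (q == V (m - 2)) || (q == V (m - 1)).
Proof. by rewrite -pred2S; apply: hull_edge_meets. Qed.

Definition exceptional : seq {set 'I_n} :=
  [:: [set x; V 0]; [set x; V 1]; [set V 0; V 1];
      [set V 0; V 2]; [set V 0; V 3]; [set V 1; V (m - 2)]; [set V 1; V (m - 1)];
      [set V 2; V 3]; [set V (m - 2); V (m - 1)]].

Ltac case_exceptional tac :=
  rewrite !inE; repeat (case/orP; [move/eqP->; tac|]); move/eqP->; tac.

Lemma exceptional_card2 e : e \in exceptional -> #|e| == 2%N.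
Proof. by case_exceptional ltac:(rewrite cards2; eval_eqs; exact: isT). Qed.

Ltac exceptional_mem := by rewrite ?inE eqxx ?orbT.

Lemma exceptional_neq p q r : [set p; q] \notin exceptional -> [set p; r] \in exceptional -> q != r.
Proof. by move=> pq pr; apply: contraNneq pq => ->. Qed.

Lemma set2_not_exceptional p q :
  (forall e, e \in exceptional -> (p \notin e) || (q \notin e)) -> [set p; q] \notin exceptional.
Proof. by move=> pq_out; apply/negP => /pq_out; rewrite !inE !eqxx ?orbT. Qed.

Ltac not_exceptional :=
  apply: set2_not_exceptional => e; case_exceptional ltac:(rewrite !inE; eval_eqs; exact: isT).

Lemma no_segment_meets_all_sides p q : p != q -> [set p; q] \notin exceptional ->
  meets pt [set p; q] [set x; V 0] -> meets pt [set p; q] [set x; V 1] ->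
  meets pt [set p; q] [set V 0; V 1] -> False.
Proof.
move=> pq pq_out xa xb ab.
have not_side : [set p; q] \notin [set [set x; V 0]; [set x; V 1]; [set V 0; V 1]].
  by apply: (contraNN _ pq_out); rewrite !inE -!orbA => /or3P[]/eqP->; exceptional_mem.
have card_pq : #|[set p; q]| == 2%N by rewrite cards2 pq.
case: x_good => _ _ /(_ (Sub [set p; q] card_pq)) /= /(_ not_side xa xb ab) allowed.
move/negP: pq_out; apply; move: allowed.
by rewrite !inE -!orbA => /or4P[]/eqP->; exceptional_mem.
Qed.

Ltac orient_ring := rewrite /orient; ring.

(* Otherwise [x b] would cross line [a d] inside the wedge cut out by the hull edges
   [a b] and [d d']. *)
Lemma x_left_of_ad : ~ meets pt [set V 0; V (m - 2)] [set x; V 1] -> 0 < O (V 0) (V (m - 2)) x.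
Proof.
move=> ad_xb; have b_left : 0 < O (V 0) (V (m - 2)) (V 1).
  by rewrite orient_swap23 oppr_gt0; apply: V_orient_lt0; nat_lia.
have : O (V 0) (V (m - 2)) x != 0 by apply: O_neq0; neq.
rewrite neq_lt => /orP[x_right|//]; exfalso; apply: ad_xb.
apply: (meets_of_crossing_in_wedge (A1 := pt (V 0)) (A2 := pt (V 1))
                                   (B1 := pt (V (m - 2))) (B2 := pt (V (m - 1)))).
- neq.
- by apply: pt_neq; neq.
- nra.
- exact: orient_aba.
- by apply: V_orient_lt0; nat_lia.
- by apply/ltW; apply: (@V_edge_right 0); neq.
- by rewrite orient_abb.
- exact: orient_aba.
- by apply: V_edge_right'; neq.
- by apply/ltW; apply: V_edge_right'; neq.
- by apply/ltW; apply: V_edge_right'; neq.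
Qed.

Lemma x_right_of_bc' : ~ meets pt [set V 1; V 3] [set x; V 0] -> O (V 1) (V 3) x < 0.
Proof.
move=> bc'_xa; have a_right : O (V 1) (V 3) (V 0) < 0.
  by rewrite -orient_cycle; apply: V_orient_lt0; nat_lia.
have : O (V 1) (V 3) x != 0 by apply: O_neq0; neq.
rewrite neq_lt => /orP[//|x_left]; exfalso; apply: bc'_xa.
apply: (meets_of_crossing_in_wedge (A1 := pt (V 0)) (A2 := pt (V 1))
                                   (B1 := pt (V 3)) (B2 := pt (V 4))).
- neq.
- by apply: pt_neq; neq.
- nra.
- exact: orient_abb.
- by apply: V_orient_lt0; nat_lia.
- by apply/ltW; apply: (@V_edge_right 0); neq.
- by rewrite orient_aba.
- exact: orient_aba.
- by apply: (@V_edge_right 3); neq.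
- by apply/ltW; apply: (@V_edge_right 3); neq.
- by apply/ltW; apply: (@V_edge_right 3); neq.
Qed.

Lemma segment_from_b_meets_xa w : w != x -> w != V 0 -> w != V 1 ->
  0 < O x (V 1) w -> O (V 0) x w < 0 -> meets pt [set V 1; w] [set x; V 0].
Proof.
move=> wx w0 w1 xbw_gt0 axw_lt0; apply: meets_of_crossing; first by neq.
- by apply: pt_neq; neq.
- have -> : O (V 1) w x = O x (V 1) w by orient_ring.
  have -> : O (V 1) w (V 0) = O (V 0) (V 1) w by orient_ring.
  by rewrite pmulr_rlt0 //; apply: (@V_edge_right 0); neq.
- have -> : O x (V 0) (V 1) = O (V 0) (V 1) x by orient_ring.
  have -> : O x (V 0) w = - O (V 0) x w by orient_ring.
  by rewrite nmulr_rlt0 ?oppr_gt0 //; apply: (@V_edge_right 0); neq.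
Qed.

Lemma segment_from_a_meets_xb w : w != x -> w != V 0 -> w != V 1 ->
  O x (V 0) w < 0 -> O (V 1) w x < 0 -> meets pt [set V 0; w] [set x; V 1].
Proof.
move=> wx w0 w1 xaw_lt0 bwx_lt0; apply: meets_of_crossing; first by neq.
- by apply: pt_neq; neq.
- have -> : O (V 0) w x = O x (V 0) w by orient_ring.
  have -> : O (V 0) w (V 1) = - O (V 0) (V 1) w by orient_ring.
  by rewrite nmulr_rlt0 // oppr_gt0; apply: (@V_edge_right 0); neq.
- have -> : O x (V 1) (V 0) = - O (V 0) (V 1) x by orient_ring.
  have -> : O x (V 1) w = O (V 1) w x by orient_ring.
  by rewrite pmulr_rlt0 // oppr_gt0; apply: (@V_edge_right 0); neq.
Qed.

(* A point [w] right of [x b] would be right of [b d], hence of [b c'], and finally left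
   of [x b]; a point [w] left of [x b] makes [b w] meet all three sides. *)
Lemma segment_from_c_not_meets_xb_ad j w : (j == 2%N) || (j == 3%N) ->
  w != V 0 -> w != V 1 -> w != V 2 -> w != V 3 -> w != V (m - 2) -> w != V (m - 1) ->
  ~ meets pt [set V 0; V (m - 2)] [set x; V 1] ->
  meets pt [set V j; w] [set x; V 1] -> meets pt [set V j; w] [set V 0; V (m - 2)] -> False.
Proof.
move=> hj w0 w1 w2 w3 wd wd' ad_xb S_xb S_ad.
have [j1 j4] : (1 < j)%N /\ (j < 4)%N by case/orP: hj => /eqP->.
have wj : w != V j by case/orP: hj => /eqP->.
have x_left := x_left_of_ad ad_xb.
have c_left : 0 < O (V 0) (V (m - 2)) (V j).
  by rewrite orient_swap23 oppr_gt0; apply: V_orient_lt0; nat_lia.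
have [wx|wx] := eqVneq w x.
  by apply: (left_of_line_not_meets _ (meetsC S_ad)) => u; rewrite !inE wx => /orP[]/eqP->.
have w_right : O (V 0) (V (m - 2)) w < 0.
  have : O (V 0) (V (m - 2)) (V j) * O (V 0) (V (m - 2)) w < 0.
    by apply: meets_orient_opp (meetsC S_ad) _ _; apply: O_neq0; neq.
  by rewrite pmulr_rlt0.
have cw_xb : O x (V 1) (V j) * O x (V 1) w < 0.
  by apply: meets_orient_opp (meetsC S_xb) _ _; apply: O_neq0; neq.
have : O x (V 1) w != 0 by apply: O_neq0; neq.
rewrite neq_lt => /orP[xbw_lt0|xbw_gt0].
- have xbc_gt0 : 0 < O x (V 1) (V j) by move: cw_xb; rewrite nmulr_llt0.
  have bdw_lt0 : O (V 1) (V (m - 2)) w < 0.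
    apply: (orient_pivot_lt0 (p := pt (V 0)) (r := pt (V (m - 1)))) w_right.
    - by apply: V_orient_lt0; nat_lia.
    - by rewrite -orient_cycle; apply: V_orient_lt0; nat_lia.
    - by rewrite orient_cycle; apply: V_edge_right'; neq.
    - by apply: V_orient_lt0; nat_lia.
  case/orP: hj => /eqP jE; rewrite jE in xbc_gt0.
    have : O (V 1) (V 2) x < 0 by apply: (@V_edge_right 1); neq.
    by rewrite -orient_cycle; lra.
  have bc'w_lt0 : O (V 1) (V 3) w < 0.
    apply: (orient_trans (e := pt (V 2)) (v := pt (V (m - 2)))) _ bdw_lt0 _ _ _;
      try by apply: (@V_edge_right 1); neq.
    by apply: V_orient_lt0; nat_lia.
  have bxw_lt0 : O (V 1) x w < 0.
    apply: (orient_trans (e := pt (V 2)) (v := pt (V 3))) _ bc'w_lt0 _ _ _;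
      try by apply: (@V_edge_right 1); neq.
    by rewrite orient_swap12 oppr_lt0.
  by move: xbw_lt0; rewrite orient_swap12; lra.
- have axw_lt0 : O (V 0) x w < 0.
    apply: (orient_trans (e := pt (V 1)) (v := pt (V (m - 2)))) _ w_right _ _ _;
      try by apply: (@V_edge_right 0); neq.
    by rewrite orient_swap23 oppr_lt0.
  apply: (@no_segment_meets_all_sides (V 1) w); first by neq.
  - by not_exceptional.
  - exact: segment_from_b_meets_xa.
  - by apply: (@meets_shared _ _ pt _ _ (V 1)); rewrite !inE eqxx ?orbT.
  - by apply: (@meets_shared _ _ pt _ _ (V 1)); rewrite !inE eqxx ?orbT.
Qed.

Lemma segment_from_d_not_meets_xa_bc' k w : (k == m - 2)%N || (k == m - 1)%N ->
  w != V 0 -> w != V 1 -> w != V 2 -> w != V 3 -> w != V (m - 2) -> w != V (m - 1) ->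
  ~ meets pt [set V 1; V 3] [set x; V 0] ->
  meets pt [set V k; w] [set x; V 0] -> meets pt [set V k; w] [set V 1; V 3] -> False.
Proof.
move=> hk w0 w1 w2 w3 wd wd' bc'_xa S_xa S_bc'.
have [k3 km] : (3 < k)%N /\ (k < m)%N by case/orP: hk => /eqP->; nat_lia.
have wk : w != V k by case/orP: hk => /eqP->.
have x_right := x_right_of_bc' bc'_xa.
have d_right : O (V 1) (V 3) (V k) < 0 by apply: V_orient_lt0; nat_lia.
have [wx|wx] := eqVneq w x.
  by apply: (right_of_line_not_meets _ (meetsC S_bc')) => u; rewrite !inE wx => /orP[]/eqP->.
have w_left : 0 < O (V 1) (V 3) w.
  have : O (V 1) (V 3) (V k) * O (V 1) (V 3) w < 0.
    by apply: meets_orient_opp (meetsC S_bc') _ _; apply: O_neq0; neq.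
  by rewrite nmulr_rlt0.
have dw_xa : O x (V 0) (V k) * O x (V 0) w < 0.
  by apply: meets_orient_opp (meetsC S_xa) _ _; apply: O_neq0; neq.
have : O x (V 0) w != 0 by apply: O_neq0; neq.
rewrite neq_lt => /orP[xaw_lt0|xaw_gt0].
- have bwx_lt0 : O (V 1) w x < 0.
    apply: (orient_trans (e := pt (V 2)) (v := pt (V 3))) _ x_right _ _ _;
      try by apply: (@V_edge_right 1); neq.
    by rewrite orient_swap23 oppr_lt0.
  apply: (@no_segment_meets_all_sides (V 0) w); first by neq.
  - by not_exceptional.
  - by apply: (@meets_shared _ _ pt _ _ (V 0)); rewrite !inE eqxx ?orbT.
  - exact: segment_from_a_meets_xb.
  - by apply: (@meets_shared _ _ pt _ _ (V 0)); rewrite !inE eqxx ?orbT.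
- have xad_lt0 : O x (V 0) (V k) < 0 by move: dw_xa; rewrite pmulr_llt0.
  have ac'w_gt0 : 0 < O (V 0) (V 3) w.
    apply: (orient_pivot_gt0 (p := pt (V 1)) (r := pt (V 2))) _ _ _ _ w_left.
    - by rewrite orient_swap23 oppr_gt0; apply: V_orient_lt0; nat_lia.
    - by rewrite orient_swap23 oppr_gt0; apply: V_orient_lt0; nat_lia.
    - by rewrite orient_swap23 oppr_gt0 orient_cycle; apply: (@V_edge_right 2); neq.
    - by rewrite orient_swap23 oppr_gt0; apply: V_orient_lt0; nat_lia.
  have awd_lt0 : O (V 0) w (V k) < 0.
    apply: (orient_trans (e := pt (V 1)) (v := pt (V 3))); try by apply: (@V_edge_right 0); neq.
      by rewrite orient_swap23 oppr_lt0.
    by apply: V_orient_lt0; nat_lia.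
  have awx_lt0 : O (V 0) w x < 0.
    apply: (orient_trans (e := pt (V 1)) (v := pt (V k))) awd_lt0 _ _ _ _;
      try by apply: (@V_edge_right 0); neq.
    by rewrite -orient_cycle.
  by move: xaw_gt0; rewrite orient_cycle; lra.
Qed.

Definition avoided (S T : {set 'I_n}) :=
  exists2 e, e \in exceptional & ~ meets pt e S /\ ~ meets pt e T.

Lemma avoidedC S T : avoided S T -> avoided T S.
Proof. by case=> e e_ex [eS eT]; exists e. Qed.

Lemma avoided_through_b_a z y : z != V 1 -> y != V 0 ->
  [set V 1; z] \notin exceptional -> [set V 0; y] \notin exceptional ->
  meets pt [set V 1; z] [set V 0; y] -> avoided [set V 1; z] [set V 0; y].
Proof.
move=> z1 y0 S_out T_out ST.
have z0 : z != V 0 by apply: exceptional_neq S_out _; rewrite setUC; exceptional_mem.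
have zd : z != V (m - 2) by apply: exceptional_neq S_out _; exceptional_mem.
have zd' : z != V (m - 1) by apply: exceptional_neq S_out _; exceptional_mem.
have y1 : y != V 1 by apply: exceptional_neq T_out _; exceptional_mem.
have y2 : y != V 2 by apply: exceptional_neq T_out _; exceptional_mem.
have y3 : y != V 3 by apply: exceptional_neq T_out _; exceptional_mem.
case: (pselect (meets pt [set V 2; V 3] [set V 1; z])) => [cc'_S|cc'_S]; last first.
  by exists [set V 2; V 3]; first exceptional_mem; split=> //; apply: hull_edge_not_meets; neq.
have z_c : (z == V 2) || (z == V 3) by apply: hull_edge_meets cc'_S; neq.
case: (pselect (meets pt [set V (m - 2); V (m - 1)] [set V 0; y])) => [dd'_T|dd'_T]; last first.
  exists [set V (m - 2); V (m - 1)]; first exceptional_mem.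
  by split=> //; case/orP: z_c => /eqP->; apply: hull_edge_not_meets'; neq.
have y_d : (y == V (m - 2)) || (y == V (m - 1)) by apply: (hull_edge_meets' _ _ dd'_T); neq.
exfalso; apply: (right_of_line_not_meets _ ST) => u; rewrite !inE.
by case/orP: z_c => /eqP->; case/orP: y_d => /eqP-> /orP[]/eqP->;
  first [rewrite -orient_cycle; apply: V_orient_lt0; nat_lia | apply: V_orient_lt0; nat_lia].
Qed.

Lemma avoided_from_c_through_a j w y : (j == 2%N) || (j == 3%N) ->
  w != V 0 -> w != V 1 -> w != V j -> y != V 0 ->
  [set V j; w] \notin exceptional -> [set V 0; y] \notin exceptional ->
  meets pt [set V j; w] [set x; V 1] -> meets pt [set V j; w] [set V 0; y] ->
  ~ meets pt [set V 0; y] [set x; V 1] -> avoided [set V j; w] [set V 0; y].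
Proof.
move=> hj w0 w1 wj y0 S_out T_out S_xb ST T_xb.
have [j1 j4] : (1 < j)%N /\ (j < 4)%N by case/orP: hj => /eqP->.
have y2 : y != V 2 by apply: exceptional_neq T_out _; exceptional_mem.
have y3 : y != V 3 by apply: exceptional_neq T_out _; exceptional_mem.
have dd'_S : ~ meets pt [set V (m - 2); V (m - 1)] [set V j; w].
  move=> dd'_S; have [k hk wE] : exists2 k, (k == m - 2)%N || (k == m - 1)%N & w = V k.
    have : (w == V (m - 2)) || (w == V (m - 1)) by apply: (hull_edge_meets' _ _ dd'_S); neq.
    case/orP=> /eqP->; first by exists (m - 2)%N; rewrite ?eqxx.
    by exists (m - 1)%N; rewrite ?eqxx ?orbT.
  by case: (chord_not_meets_xa_xb hj hk) => _; apply; rewrite -wE.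
have wd : w != V (m - 2).
  apply: contra_notN dd'_S => /eqP->.
  by apply: (@meets_shared _ _ pt _ _ (V (m - 2))); rewrite !inE eqxx ?orbT.
have wd' : w != V (m - 1).
  apply: contra_notN dd'_S => /eqP->.
  by apply: (@meets_shared _ _ pt _ _ (V (m - 1))); rewrite !inE eqxx ?orbT.
case: (pselect (meets pt [set V (m - 2); V (m - 1)] [set V 0; y])) => [dd'_T|dd'_T]; last first.
  by exists [set V (m - 2); V (m - 1)]; first exceptional_mem.
exfalso; have : (y == V (m - 2)) || (y == V (m - 1)).
  by apply: (hull_edge_meets' _ _ dd'_T); neq.
case/orP=> /eqP yE.
- have w2 : w != V 2.
    case/orP: hj => /eqP jE; first by rewrite -jE.
    by apply: exceptional_neq S_out _; rewrite jE setUC; exceptional_mem.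
  have w3 : w != V 3.
    case/orP: hj => /eqP jE; last by rewrite -jE.
    by apply: exceptional_neq S_out _; rewrite jE; exceptional_mem.
  rewrite yE in ST T_xb.
  exact: (segment_from_c_not_meets_xb_ad hj w0 w1 w2 w3 wd wd' T_xb S_xb).
- apply: (@hull_edge_not_meets (m - 1) (V j) w); rewrite ?V_pred1S; try neq.
  by rewrite setUC -yE; apply: meetsC.
Qed.

Lemma avoided_meeting_xb_through_a p q y : p != q ->
  p != V 0 -> p != V 1 -> q != V 0 -> q != V 1 -> y != V 0 ->
  [set p; q] \notin exceptional -> [set V 0; y] \notin exceptional ->
  meets pt [set p; q] [set x; V 1] -> meets pt [set p; q] [set V 0; y] ->
  ~ meets pt [set V 0; y] [set x; V 1] -> avoided [set p; q] [set V 0; y].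
Proof.
move=> pq p0 p1 q0 q1 y0 S_out T_out S_xb ST T_xb.
have y2 : y != V 2 by apply: exceptional_neq T_out _; exceptional_mem.
have y3 : y != V 3 by apply: exceptional_neq T_out _; exceptional_mem.
case: (pselect (meets pt [set V 2; V 3] [set p; q])) => [cc'_S|cc'_S]; last first.
  by exists [set V 2; V 3]; first exceptional_mem; split=> //; apply: hull_edge_not_meets; neq.
have : (V 2 \in [set p; q]) || (V 3 \in [set p; q]).
  rewrite !inE; apply/negPn/negP; rewrite !negb_or => /andP[/andP[p2 q2] /andP[p3 q3]].
  by apply: hull_edge_not_meets cc'_S; rewrite eq_sym.
case/orP=> /(set2_mem_other pq) [w [Sw w_in wj]]; rewrite Sw in S_out S_xb ST *;
  apply: avoided_from_c_through_a => //; exact: set2_mem_neq w_in _ _.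
Qed.

Lemma avoided_through_a p q y : p != q -> y != V 0 ->
  [set p; q] \notin exceptional -> [set V 0; y] \notin exceptional ->
  meets pt [set p; q] [set V 0; y] -> avoided [set p; q] [set V 0; y].
Proof.
move=> pq y0 S_out T_out ST.
have through_a (S : {set 'I_n}) : V 0 \in S -> meets pt S [set x; V 0] /\ meets pt S [set V 0; V 1].
  by move=> S0; split; apply: (@meets_shared _ _ pt _ _ (V 0)); rewrite ?inE ?eqxx ?orbT.
have T_xb : ~ meets pt [set V 0; y] [set x; V 1].
  have [T_xa T_ab] := through_a [set V 0; y] (setU11 _ _).
  by move=> T_xb; apply: (no_segment_meets_all_sides _ T_out T_xa T_xb T_ab); rewrite eq_sym.
case: (pselect (meets pt [set p; q] [set x; V 1])) => [S_xb|S_xb]; last first.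
  by exists [set x; V 1]; first exceptional_mem; split=> /meetsC.
case: (boolP (V 0 \in [set p; q])) => [S0|]; first case: (through_a _ S0) => S_xa S_ab.
  by exfalso; apply: (no_segment_meets_all_sides pq S_out S_xa S_xb S_ab).
rewrite !inE negb_or => /andP[p0 q0]; rewrite ![V 0 == _]eq_sym in p0 q0.
case: (boolP (V 1 \in [set p; q])) => [/(set2_mem_other pq) [z [Sz z_in z1]]|].
  rewrite Sz in S_out ST *; apply: avoided_through_b_a => //.
rewrite !inE negb_or => /andP[p1 q1]; rewrite ![V 1 == _]eq_sym in p1 q1.
exact: avoided_meeting_xb_through_a.
Qed.

Lemma avoided_from_d_through_b k w y : (k == m - 2)%N || (k == m - 1)%N ->
  w != V 0 -> w != V 1 -> w != V k -> y != V 0 -> y != V 1 ->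
  [set V k; w] \notin exceptional -> [set V 1; y] \notin exceptional ->
  meets pt [set V k; w] [set x; V 0] -> meets pt [set V k; w] [set V 1; y] ->
  ~ meets pt [set V 1; y] [set x; V 0] -> avoided [set V k; w] [set V 1; y].
Proof.
move=> hk w0 w1 wk y0 y1 S_out T_out S_xa ST T_xa.
have [k3 km] : (3 < k)%N /\ (k < m)%N by case/orP: hk => /eqP->; nat_lia.
have yd : y != V (m - 2) by apply: exceptional_neq T_out _; exceptional_mem.
have yd' : y != V (m - 1) by apply: exceptional_neq T_out _; exceptional_mem.
have cc'_S : ~ meets pt [set V 2; V 3] [set V k; w].
  move=> cc'_S; have [j hj wE] : exists2 j, (j == 2%N) || (j == 3%N) & w = V j.
    have : (w == V 2) || (w == V 3) by apply: (hull_edge_meets _ _ cc'_S); neq.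
    by case/orP=> /eqP->; [exists 2%N | exists 3%N].
  by case: (chord_not_meets_xa_xb hj hk) => + _; apply; rewrite setUC -wE.
have w2 : w != V 2.
  apply: contra_notN cc'_S => /eqP->.
  by apply: (@meets_shared _ _ pt _ _ (V 2)); rewrite !inE eqxx ?orbT.
have w3 : w != V 3.
  apply: contra_notN cc'_S => /eqP->.
  by apply: (@meets_shared _ _ pt _ _ (V 3)); rewrite !inE eqxx ?orbT.
case: (pselect (meets pt [set V 2; V 3] [set V 1; y])) => [cc'_T|cc'_T]; last first.
  by exists [set V 2; V 3]; first exceptional_mem.
exfalso; have : (y == V 2) || (y == V 3) by apply: (hull_edge_meets _ _ cc'_T); neq.
case/orP=> /eqP yE.
- by rewrite yE in ST; apply: (@hull_edge_not_meets 1 (V k) w) (meetsC ST); neq.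
- have wd : w != V (m - 2).
    case/orP: hk => /eqP kE; first by rewrite -kE.
    by apply: exceptional_neq S_out _; rewrite kE setUC; exceptional_mem.
  have wd' : w != V (m - 1).
    case/orP: hk => /eqP kE; last by rewrite -kE.
    by apply: exceptional_neq S_out _; rewrite kE; exceptional_mem.
  rewrite yE in ST T_xa.
  exact: (segment_from_d_not_meets_xa_bc' hk w0 w1 w2 w3 wd wd' T_xa S_xa).
Qed.

Lemma avoided_meeting_xa_through_b p q y : p != q ->
  p != V 0 -> p != V 1 -> q != V 0 -> q != V 1 -> y != V 0 -> y != V 1 ->
  [set p; q] \notin exceptional -> [set V 1; y] \notin exceptional ->
  meets pt [set p; q] [set x; V 0] -> meets pt [set p; q] [set V 1; y] ->
  ~ meets pt [set V 1; y] [set x; V 0] -> avoided [set p; q] [set V 1; y].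
Proof.
move=> pq p0 p1 q0 q1 y0 y1 S_out T_out S_xa ST T_xa.
have yd : y != V (m - 2) by apply: exceptional_neq T_out _; exceptional_mem.
have yd' : y != V (m - 1) by apply: exceptional_neq T_out _; exceptional_mem.
case: (pselect (meets pt [set V (m - 2); V (m - 1)] [set p; q])) => [dd'_S|dd'_S]; last first.
  exists [set V (m - 2); V (m - 1)]; first exceptional_mem.
  by split=> //; apply: hull_edge_not_meets'; neq.
have : (V (m - 2) \in [set p; q]) || (V (m - 1) \in [set p; q]).
  rewrite !inE; apply/negPn/negP; rewrite !negb_or => /andP[/andP[pd qd] /andP[pd' qd']].
  by apply: hull_edge_not_meets' dd'_S; rewrite eq_sym.
case/orP=> /(set2_mem_other pq) [w [Sw w_in wk]]; rewrite Sw in S_out S_xa ST *;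
  apply: avoided_from_d_through_b => //; rewrite ?eqxx ?orbT //; exact: set2_mem_neq w_in _ _.
Qed.

Lemma avoided_through_b p q y : p != q -> y != V 0 -> y != V 1 -> p != V 0 -> q != V 0 ->
  [set p; q] \notin exceptional -> [set V 1; y] \notin exceptional ->
  meets pt [set p; q] [set V 1; y] -> avoided [set p; q] [set V 1; y].
Proof.
move=> pq y0 y1 p0 q0 S_out T_out ST.
have through_b (S : {set 'I_n}) : V 1 \in S -> meets pt S [set x; V 1] /\ meets pt S [set V 0; V 1].
  by move=> S1; split; apply: (@meets_shared _ _ pt _ _ (V 1)); rewrite ?inE ?eqxx ?orbT.
have T_xa : ~ meets pt [set V 1; y] [set x; V 0].
  have [T_xb T_ab] := through_b [set V 1; y] (setU11 _ _).
  by move=> T_xa; apply: (no_segment_meets_all_sides _ T_out T_xa T_xb T_ab); rewrite eq_sym.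
case: (pselect (meets pt [set p; q] [set x; V 0])) => [S_xa|S_xa]; last first.
  by exists [set x; V 0]; first exceptional_mem; split=> /meetsC.
case: (boolP (V 1 \in [set p; q])) => [S1|]; first case: (through_b _ S1) => S_xb S_ab.
  by exfalso; apply: (no_segment_meets_all_sides pq S_out S_xa S_xb S_ab).
rewrite !inE negb_or => /andP[p1 q1]; rewrite ![V 1 == _]eq_sym in p1 q1.
exact: avoided_meeting_xa_through_b.
Qed.

Lemma avoided_of_meets (S T : {set 'I_n}) : #|S| == 2%N -> #|T| == 2%N ->
  S \notin exceptional -> T \notin exceptional -> meets pt S T -> avoided S T.
Proof.
move=> /cards2P [p [q [pq ->]]] /cards2P [r [s [rs ->]]] S_out T_out ST.
case: (boolP (V 0 \in [set r; s])) => [/(set2_mem_other rs) [y [Ty _ y0]]|T0].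
  by rewrite Ty in T_out ST *; apply: avoided_through_a.
case: (boolP (V 0 \in [set p; q])) => [/(set2_mem_other pq) [y [Sy _ y0]]|S0].
  by rewrite Sy in S_out ST *; apply: avoidedC; apply: avoided_through_a => //; apply: meetsC.
move: S0 T0; rewrite !inE !negb_or => /andP[p0 q0] /andP[r0 s0].
rewrite ![V 0 == _]eq_sym in p0 q0 r0 s0.
case: (boolP (V 1 \in [set r; s])) => [/(set2_mem_other rs) [y [Ty y_in y1]]|T1].
  by rewrite Ty in T_out ST *; apply: avoided_through_b => //; apply: set2_mem_neq y_in _ _.
case: (boolP (V 1 \in [set p; q])) => [/(set2_mem_other pq) [y [Sy y_in y1]]|S1].
  rewrite Sy in S_out ST *; apply: avoidedC; apply: avoided_through_b => //.
  - exact: set2_mem_neq y_in _ _.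
  - exact: meetsC.
move: S1 T1; rewrite !inE !negb_or => /andP[p1 q1] /andP[r1 s1].
rewrite ![V 1 == _]eq_sym in p1 q1 r1 s1.
by exists [set V 0; V 1]; first exceptional_mem; split; apply: (@hull_edge_not_meets 0).
Qed.

Definition visible_segments : {set segment n} := [set s | val s \notin exceptional].

Lemma visible_segments_mv : mv_set (Dgraph pt) visible_segments.
Proof.
apply: mv_set_common_neighbour => s t; rewrite !in_set => s_out t_out _.
case: (pselect (meets pt (val s) (val t))) => [ST _|nST /(_ nST) []].
have [e e_ex [es et]] := avoided_of_meets (valP s) (valP t) s_out t_out ST.
exists (Sub e (exceptional_card2 e_ex)); first by rewrite in_set SubK negbK.
by split; rewrite /Dgraph /seg_disjoint SubK // => /meetsC.
Qed.

Lemma card_visible_segments : ('C(n, 2) - 9 <= #|visible_segments|)%N.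
Proof.
have exceptional_le9 : (#|~: visible_segments| <= 9)%N.
  rewrite -(card_imset _ val_inj); apply: leq_trans (card_size exceptional).
  by apply: subset_leq_card; apply/subsetP => e /imsetP[s]; rewrite !inE negbK => s_ex ->.
by rewrite -card_segment -(cardsC visible_segments) leq_subLR addnC leq_add2r.
Qed.

End GoodTriangle.

Theorem proposition12 (R : realType) (n : nat) (pt : 'I_n -> point R) :
  injective pt -> general_position pt -> (6 <= #|hull_idx pt|)%N ->
  has_good_triangle pt ->
  ('C(n, 2) - 9 <= mu (Dgraph pt))%N.
Proof.
move=> pt_inj pt_general hull_ge6 [v [x [i [v_clockwise x_good]]]].
have U_mv := visible_segments_mv pt_inj pt_general v_clockwise hull_ge6 x_good.
exact: leq_trans (card_visible_segments pt v x i) (mv_set_card_le_mu U_mv).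
Qed.
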